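(* For every positive integer $n$ with $n\not\equiv -1\pmod 7$, \[u(n,n+3)=\varepsilon(n,n+3)=\left\lfloor\frac{4n+12}{7}\right\rfloor.\] Moreover, for every positive integer $m$, $u(7m-1,7m+2)=4m$.
   Context: All matrices are binary. For a nonempty set $S$ of columns of a binary matrix, let $z$ be the sum over the integers of the columns in $S$. $S$ is called $1$-free if no entry of $z$ equals $1$, and even if all entries of $z$ are even. For a binary $m\times n$ matrix $A$ with $m<n$: $\varepsilon(A)$ is the smallest cardinality of a nonempty even set of columns, and $u(A)$ the smallest cardinality of a nonempty $1$-free set of columns. For $m<n$, $\varepsilon(m,n)$ and $u(m,n)$ are the maxima of $\varepsilon(A)$, resp. $u(A)$, over all binary $m\times n$ matrices. *)

From mathcomp Require Import all_boot all_order all_algebra.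
Set Implicit Arguments. Unset Strict Implicit. Unset Printing Implicit Defensive.

Definition colsum (m n : nat) (A : 'M[bool]_(m, n)) (S : {set 'I_n}) (i : 'I_m) : nat :=
  \sum_(j in S) nat_of_bool (A i j).

Definition even_set (m n : nat) (A : 'M[bool]_(m, n)) (S : {set 'I_n}) : bool :=
  [forall i, ~~ odd (colsum A S i)].

Definition onefree_set (m n : nat) (A : 'M[bool]_(m, n)) (S : {set 'I_n}) : bool :=
  [forall i, colsum A S i != 1%N].

(* smallest cardinality of a nonempty even (resp. 1-free) set of columns.
   The default value n of the min is never attained spuriously when m < n,
   since then a nonempty even set always exists. *)
Definition epsA (m n : nat) (A : 'M[bool]_(m, n)) : nat :=
  \big[minn/n]_(S : {set 'I_n} | (S != set0) && even_set A S) #|S|.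

Definition uA (m n : nat) (A : 'M[bool]_(m, n)) : nat :=
  \big[minn/n]_(S : {set 'I_n} | (S != set0) && onefree_set A S) #|S|.

Definition eps_mn (m n : nat) : nat := \max_(A : 'M[bool]_(m, n)) epsA A.
Definition u_mn (m n : nat) : nat := \max_(A : 'M[bool]_(m, n)) uA A.

From mathcomp Require Import all_boot all_order all_algebra.
From mathcomp Require Import zify.
Set Implicit Arguments. Unset Strict Implicit. Unset Printing Implicit Defensive.
Import Order.TTheory.

(* Upper bound: when n >= m + 3, pigeonhole on the 2^m parity vectors gives at
   least 8 even sets of columns of an m x n matrix, and they form an F_2-space
   under symmetric difference.  If c is a smallest nonempty even set and e is
   even with e <> 0, c, then |c| <= |e| and |c| <= |e + c| force
   |c| <= 2 |e \ c|.  Choose even e1, e2 independent together with c; the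
   parts outside c of e1, e2 and e1 + e2 cover each column at most twice, so
   3 ceil(|c| / 2) <= 2 (n - |c|).  The rounding is what gives 4k rather than
   4k + 1 for 7k - 1 rows.
   Lower bound: a matrix is described by the supports of its rows.  A base
   matrix on r + 3 columns, checked exhaustively, is extended k times by seven
   rows and seven columns: a fixed 4 x 7 block whose nonempty 1-free sets have
   at least 4 elements and meet its columns 0, 1, 3, plus three rows of weight 2
   tying these columns to three link columns of the previous stage.  A nonempty
   1-free set then meets every stage, in at least 4 columns of each block. *)

Definition onefree_rows (rows : seq (seq nat)) (f : nat -> bool) : bool :=
  all (fun r => count f r != 1) rows.

(* [L] lists the link columns to which the next stage is attached. *)
Definition gadget (rows : seq (seq nat)) (c d : nat) (L : seq nat) : Prop :=
  forall f : nat -> bool, onefree_rows rows f -> has f (iota 0 c) ->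
    d <= count f (iota 0 c) /\ has f L.

Lemma has_iota_range (f : nat -> bool) c s :
  all (fun x => x < c) s -> has f s -> has f (iota 0 c).
Proof.
move=> /allP s_lt /hasP [x xs fx]; apply/hasP; exists x => //.
by rewrite mem_iota add0n s_lt.
Qed.

Fixpoint bitseqs (c : nat) : seq (seq bool) :=
  if c is c'.+1 then [seq false :: s | s <- bitseqs c'] ++ [seq true :: s | s <- bitseqs c']
  else [:: [::]].

Lemma mem_bitseqs (s : seq bool) : s \in bitseqs (size s).
Proof.
elim: s => [|b s IHs] //=.
by rewrite mem_cat; case: b; rewrite map_f ?orbT.
Qed.

Definition gadget_check (rows : seq (seq nat)) (c d : nat) (L : seq nat) : bool :=
  all (fun s => let f := nth false s in
         onefree_rows rows f ==> has f (iota 0 c) ==>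
         (d <= count f (iota 0 c)) && has f L)
      (bitseqs c).

Lemma gadget_checkP rows c d L :
  all (all (fun x => x < c)) rows -> all (fun x => x < c) L ->
  gadget_check rows c d L -> gadget rows c d L.
Proof.
move=> rows_lt L_lt /allP check f.
have := check (mkseq f c); rewrite -{2}(size_mkseq f c) => /(_ (mem_bitseqs _)) /=.
have agree t : all (fun x => x < c) t -> {in t, nth false (mkseq f c) =1 f}.
  by move=> /allP t_lt x /t_lt x_lt; rewrite nth_mkseq.
have iota_lt : all (fun x => x < c) (iota 0 c) by apply/allP => x; rewrite mem_iota.
rewrite (eq_in_count (agree _ iota_lt)) (eq_in_has (agree _ iota_lt)).
rewrite (eq_in_has (agree _ L_lt)).
have -> : onefree_rows rows (nth false (mkseq f c)) = onefree_rows rows f.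
  apply: eq_in_all => r /(allP rows_lt) r_lt /=.
  by rewrite (eq_in_count (agree _ r_lt)).
by move=> /implyP impl f1 /(implyP (impl f1)) /andP.
Qed.

Definition shift (c : nat) (r : seq nat) : seq nat := [seq c + x | x <- r].

(* A 1-free set contains both or neither of the columns of a weight-2 row. *)
Definition extend (rows : seq (seq nat)) (c : nat) (L : seq nat)
    (rowsG : seq (seq nat)) (LG : seq nat) : seq (seq nat) :=
  rows ++ map (shift c) rowsG ++ [seq [:: p.1; c + p.2] | p <- zip L LG].

Lemma onefree_extend rows c L rowsG LG (f : nat -> bool) :
  onefree_rows (extend rows c L rowsG LG) f =
  [&& onefree_rows rows f, onefree_rows rowsG (f \o addn c)
    & all (fun p => f p.1 == f (c + p.2)) (zip L LG)].
Proof.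
rewrite /onefree_rows !all_cat !all_map; congr [&& _, _ & _].
  by apply: eq_all => r /=; rewrite count_map.
by apply: eq_all => p /=; case: (f p.1); case: (f (c + p.2)).
Qed.

Lemma has_zip_eq (T U : Type) (f : T -> bool) (g : U -> bool) (L : seq T) (L' : seq U) :
  size L = size L' ->
  all (fun p => f p.1 == g p.2) (zip L L') -> has f L = has g L'.
Proof.
elim: L L' => [|a L IHL] [|b L'] //= [size_eq] /andP [/eqP -> eqs].
by rewrite (IHL _ size_eq eqs).
Qed.

Lemma iota_addn c c' : iota 0 (c + c') = iota 0 c ++ map (addn c) (iota 0 c').
Proof. by rewrite iotaD add0n -{2}(addn0 c) iotaDl. Qed.

Lemma extend_gadget rows c d L rowsG cG dG LG :
  size L = size LG -> all (fun x => x < c) L -> all (fun x => x < cG) LG ->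
  gadget rows c d L -> gadget rowsG cG dG LG ->
  gadget (extend rows c L rowsG LG) (c + cG) (d + dG) (shift c LG).
Proof.
move=> size_eq L_lt LG_lt gadget_rows gadget_G f.
rewrite onefree_extend => /and3P [f1 g1 linked].
have has_links := @has_zip_eq _ _ f (f \o addn c) _ _ size_eq linked.
rewrite iota_addn count_cat has_cat !count_map !has_map.
case: (boolP (has f (iota 0 c))) => [f_ne _ | f_empty /= g_ne].
  have [fd fL] := gadget_rows f f1 f_ne.
  have g_ne : has (f \o addn c) (iota 0 cG).
    by apply: has_iota_range LG_lt _; rewrite -has_links.
  have [gd gL] := gadget_G _ g1 g_ne.
  by split; [rewrite leq_add | ].
have [_ gL] := gadget_G _ g1 g_ne.
by move: f_empty; rewrite (has_iota_range L_lt) // has_links.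
Qed.

Lemma all_uniq_extend rows c L rowsG LG :
  size L <= size LG -> all (fun x => x < c) L ->
  all uniq rows -> all uniq rowsG -> all uniq (extend rows c L rowsG LG).
Proof.
move=> size_le L_lt rows_uniq G_uniq; rewrite !all_cat rows_uniq !all_map /=.
apply/andP; split.
  apply: (sub_all _ G_uniq) => r /=.
  by rewrite map_inj_uniq //; apply: addnI.
have : all (fun x => x < c) (unzip1 (zip L LG)) by rewrite unzip1_zip.
by rewrite all_map; apply: sub_all => p /= p_lt; rewrite andbT inE neq_ltn ltn_addr.
Qed.

Definition block_rows : seq (seq nat) :=
  [:: [:: 1; 3; 5]; [:: 1; 4; 6]; [:: 2; 3; 6]; [:: 0; 5; 6]].
Definition block_links : seq nat := [:: 0; 1; 3].

Lemma block_gadget : gadget block_rows 7 4 block_links.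
Proof. by apply: gadget_checkP; vm_compute. Qed.

Fixpoint tower (rows : seq (seq nat)) (c : nat) (L : seq nat) (k : nat) : seq (seq nat) :=
  if k is k'.+1 then
    tower (extend rows c L block_rows block_links) (c + 7) (shift c block_links) k'
  else rows.

Lemma shift_block_links c : all (fun x => x < c + 7) (shift c block_links).
Proof. by rewrite /= !ltn_add2l. Qed.

Lemma size_tower rows c L k :
  size L = 3 -> size (tower rows c L k) = size rows + 7 * k.
Proof.
elim: k rows c L => [|k IHk] rows c L size_L /=; first by rewrite addn0.
by rewrite IHk // !size_cat !size_map size_zip size_L /=; lia.
Qed.

Lemma all_uniq_tower rows c L k : size L = 3 -> all (fun x => x < c) L ->
  all uniq rows -> all uniq (tower rows c L k).
Proof.
elim: k rows c L => [|k IHk] rows c L size_L L_lt rows_uniq //=.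
apply: (IHk _ _ _ _ (shift_block_links c)) => //.
by apply: all_uniq_extend; rewrite ?size_L.
Qed.

Lemma tower_gadget rows c d L k : size L = 3 -> all (fun x => x < c) L ->
  gadget rows c d L -> exists L', gadget (tower rows c L k) (c + 7 * k) (d + 4 * k) L'.
Proof.
elim: k rows c d L => [|k IHk] rows c d L size_L L_lt gadget_rows.
  by exists L; rewrite !muln0 !addn0.
have := IHk (extend rows c L block_rows block_links) (c + 7) (d + 4)
  (shift c block_links) erefl (shift_block_links c).
rewrite !mulnS !addnA; apply.
by apply: extend_gadget block_gadget; rewrite ?size_L.
Qed.

Definition base_rows (r : nat) : seq (seq nat) :=
  match r with
  | 1 => [:: [:: 0; 1; 2; 3]]
  | 2 => [:: [:: 0; 2; 3]; [:: 1; 3; 4]]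
  | 3 => [:: [:: 0; 2; 3]; [:: 1; 2; 5]; [:: 0; 2; 4; 5]]
  | 4 => [:: [:: 2; 3; 4]; [:: 1; 3; 5]; [:: 1; 2; 6]; [:: 0; 3; 6]]
  | 5 => [:: [:: 1; 4; 5]; [:: 0; 4; 6]; [:: 3; 6]; [:: 0; 1; 2; 6]; [:: 1; 6; 7]]
  | 6 => block_rows ++ [:: [:: 7; 0]; [:: 8; 1]]
  | 7 => [:: [:: 1; 2; 3; 5; 6]; [:: 1; 8]; [:: 4; 5; 7]; [:: 1; 2; 3];
            [:: 1; 5; 9]; [:: 0; 1; 4]; [:: 0; 2; 5]]
  | _ => [::]
  end.

Definition base_links (r : nat) : seq nat :=
  if r == 6 then block_links else [:: 0; 1; 2].

Definition base_bound (r : nat) : nat := if r == 6 then 4 else (4 * r + 12) %/ 7.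

Lemma base_spec r : 0 < r <= 7 ->
  [/\ size (base_rows r) = r, all uniq (base_rows r), base_bound r <= r + 3,
      size (base_links r) = 3 & all (fun x => x < r + 3) (base_links r)].
Proof. by case: r => [|[|[|[|[|[|[|[|r]]]]]]]]. Qed.

Lemma base_gadget r : 0 < r <= 7 ->
  gadget (base_rows r) (r + 3) (base_bound r) (base_links r).
Proof. by case: r => [|[|[|[|[|[|[|[|r]]]]]]]] // _; apply: gadget_checkP; vm_compute. Qed.

Definition incidence_mx (m n : nat) (rows : seq (seq nat)) : 'M[bool]_(m, n) :=
  \matrix_(i < m, j < n) (val j \in nth [::] rows i).

Definition val_set (n : nat) (S : {set 'I_n}) : pred nat :=
  fun x => x \in [seq val j | j in S].

Lemma val_setE n (S : {set 'I_n}) j : val_set S (val j) = (j \in S).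
Proof. by rewrite /val_set mem_map ?mem_enum //; exact: val_inj. Qed.

Lemma count_val_set n (S : {set 'I_n}) : count (val_set S) (iota 0 n) = #|S|.
Proof.
rewrite -val_enum_ord count_map (eq_count (val_setE S)) -sum1_count big_enum_cond.
exact: sum1_card.
Qed.

Lemma sum_val_eq n (S : {set 'I_n}) x : \sum_(j in S) (val j == x) = val_set S x.
Proof.
rewrite -big_enum -(big_map val xpredT (fun y => nat_of_bool (y == x))).
rewrite -big_mkcond sum1_count.
apply: count_uniq_mem; rewrite map_inj_uniq ?enum_uniq //; exact: val_inj.
Qed.

Lemma sum_val_mem n (S : {set 'I_n}) (r : seq nat) :
  uniq r -> \sum_(j in S) (val j \in r) = count (val_set S) r.
Proof.
elim: r => [|x r IHr] /=; first by rewrite big1.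
case/andP => x_notin_r /IHr <-; rewrite -sum_val_eq -big_split /=.
by apply: eq_bigr => j _; rewrite in_cons; case: eqP => // ->; rewrite (negbTE x_notin_r).
Qed.

Lemma colsum_incidence m n rows (S : {set 'I_n}) (i : 'I_m) :
  uniq (nth [::] rows i) ->
  colsum (incidence_mx m n rows) S i = count (val_set S) (nth [::] rows i).
Proof.
by move=> row_uniq; rewrite /colsum -sum_val_mem //; apply: eq_bigr => j _; rewrite mxE.
Qed.

Lemma uA_incidence_ge m n rows d L : size rows = m -> all uniq rows -> d <= n ->
  gadget rows n d L -> d <= uA (incidence_mx m n rows).
Proof.
move=> size_rows rows_uniq d_le gadget_rows.
apply/(@bigmin_geP _ nat); split => // S /andP [S_ne /forallP S_onefree].
rewrite -count_val_set; apply: (gadget_rows _ _ _).1.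
  apply/allP => r /(nthP [::]) [i i_lt <-]; rewrite size_rows in i_lt.
  rewrite -(@colsum_incidence m n rows S (Ordinal i_lt)) ?S_onefree //.
  by apply: (allP rows_uniq); rewrite mem_nth ?size_rows.
by rewrite has_count count_val_set card_gt0.
Qed.

Lemma u_mn_lower_bound n r k : n = r + 7 * k -> 0 < r <= 7 ->
  base_bound r + 4 * k <= u_mn n (n + 3).
Proof.
move=> -> r_range.
have [size_base uniq_base bound_le size_links links_lt] := base_spec r_range.
have [L] := tower_gadget k size_links links_lt (base_gadget r_range).
rewrite addnAC => gadget_tower.
pose rows := tower (base_rows r) (r + 3) (base_links r) k.
apply: leq_trans (leq_bigmax (incidence_mx _ _ rows)).
apply: uA_incidence_ge gadget_tower.
- by rewrite size_tower // size_base.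
- exact: all_uniq_tower.
- lia.
Qed.

Definition symdiff (T : finType) (S U : {set T}) : {set T} := (S :\: U) :|: (U :\: S).

Section SymDiff.
Variable T : finType.
Implicit Types S U C X Y : {set T}.

Lemma in_symdiff x S U : (x \in symdiff S U) = (x \in S) (+) (x \in U).
Proof. by rewrite !inE; case: (x \in S); case: (x \in U). Qed.

Lemma symdiffK S U : symdiff (symdiff S U) U = S.
Proof. by apply/setP => x; rewrite !in_symdiff -addbA addbb addbF. Qed.

Lemma symdiffKl S U : symdiff S (symdiff S U) = U.
Proof. by apply/setP => x; rewrite !in_symdiff addbA addbb. Qed.

Lemma symdiff_eq0 S U : (symdiff S U == set0) = (S == U).
Proof.
apply/eqP/eqP => [/setP eq0 | ->]; last by apply/setP => x; rewrite in_symdiff addbb inE.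
by apply/setP => x; move: (eq0 x); rewrite in_symdiff inE; case: (x \in S); case: (x \in U).
Qed.

Lemma symdiff_setD S U C : symdiff S U :\: C = symdiff (S :\: C) (U :\: C).
Proof.
by apply/setP => x; rewrite !inE; case: (x \in S); case: (x \in U); case: (x \in C).
Qed.

Lemma sum_symdiff (F : T -> nat) S U :
  \sum_(j in S) F j + \sum_(j in U) F j =
  \sum_(j in symdiff S U) F j + 2 * \sum_(j in S :&: U) F j.
Proof.
rewrite (big_setID U (A := S)) (big_setID S (A := U)) setIC /=.
rewrite [\sum_(j in symdiff S U) _](eq_bigl [predU S :\: U & U :\: S]) => [|x];
  last by rewrite !inE.
rewrite bigU /=; first lia.
by rewrite -setI_eq0; apply/eqP/setP => x; rewrite !inE; case: (x \in S); case: (x \in U).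
Qed.

Lemma odd_sum_symdiff (F : T -> nat) S U :
  odd (\sum_(j in symdiff S U) F j) = odd (\sum_(j in S) F j) (+) odd (\sum_(j in U) F j).
Proof. by rewrite -oddD sum_symdiff oddD oddM addbF. Qed.

Lemma card_symdiff_setU X Y : #|X| + #|Y| + #|symdiff X Y| = 2 * #|X :|: Y|.
Proof.
have := sum_symdiff (fun=> 1) X Y; rewrite !sum1_card.
have := cardsU X Y; have := subset_leq_card (subsetIl X Y); lia.
Qed.

Lemma card_setD_symdiff X Y C :
  #|X :\: C| + #|Y :\: C| + #|symdiff X Y :\: C| <= 2 * (#|T| - #|C|).
Proof.
rewrite symdiff_setD card_symdiff_setU leq_mul2l /= -(cardsC C) addKn.
by apply: subset_leq_card; apply/subsetP => x; rewrite !inE; case: (x \in C).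
Qed.

End SymDiff.

Lemma pigeonhole_fiber (T U : finType) (f : T -> U) k :
  k * #|U| < #|T| -> exists y, k < #|[set x | f x == y]|.
Proof.
move=> lt_kU; apply/existsP; apply: contraLR lt_kU; rewrite negb_exists -leqNgt.
move=> /forallP small; rewrite -sum1_card (partition_big f xpredT) //= mulnC.
rewrite -sum_nat_const; apply: leq_sum => y _.
by rewrite sum1_card -cardsE leqNgt small.
Qed.

Lemma exists_notin (T : finType) (E : {set T}) (s : seq T) :
  size s < #|E| -> exists2 x, x \in E & x \notin s.
Proof.
move=> lt_sE; apply/subsetPn; apply: contraL lt_sE => /subset_leq_card le_Es.
by rewrite -leqNgt (leq_trans le_Es (card_size s)).
Qed.

Section EvenSets.
Variables (m n : nat) (A : 'M[bool]_(m, n)).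

Lemma even_symdiff S U : even_set A S -> even_set A U -> even_set A (symdiff S U).
Proof.
move=> /forallP S_even /forallP U_even; apply/forallP => i.
by rewrite odd_sum_symdiff (negbTE (S_even i)) (negbTE (U_even i)).
Qed.

Lemma even_onefree S : even_set A S -> onefree_set A S.
Proof. by move=> /forallP S_even; apply/forallP => i; apply: contraNneq (S_even i) => ->. Qed.

Lemma uA_le_epsA : uA A <= epsA A.
Proof.
apply/(@bigmin_geP _ nat); split=> [|S /andP [S_ne /even_onefree S_onefree]].
  exact: (@bigmin_le_id _ nat).
by apply: (@bigmin_le_cond _ nat); rewrite S_ne.
Qed.

Definition parity_vector (S : {set 'I_n}) : {ffun 'I_m -> bool} :=
  [ffun i => odd (colsum A S i)].

Lemma even_symdiff_parity S U :
  parity_vector S = parity_vector U -> even_set A (symdiff S U).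
Proof.
move=> /ffunP same_parity; apply/forallP => i.
by move: (same_parity i); rewrite /colsum odd_sum_symdiff !ffunE => ->; rewrite addbb.
Qed.

Lemma card_even_sets : m + 3 <= n -> 8 <= #|[set S | even_set A S]|.
Proof.
move=> le_mn.
have [y big_fiber] : exists y, 7 < #|[set S | parity_vector S == y]|.
  apply: pigeonhole_fiber.
  rewrite card_ffun card_bool card_ord -cardsT -powersetT card_powerset cardsT card_ord.
  apply: leq_trans (leq_pexp2l (isT : 0 < 2) le_mn).
  by rewrite expnD mulnC ltn_mul2l expn_gt0.
have [S0 S0_in] : exists S0, S0 \in [set S | parity_vector S == y].
  by apply/set0Pn; rewrite -card_gt0; apply: leq_ltn_trans big_fiber.
apply: leq_trans big_fiber _.
rewrite -(@card_in_imset _ _ (fun S => symdiff S S0)); last first.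
  by move=> S1 S2 _ _ eq12; rewrite -(symdiffK S1 S0) eq12 symdiffK.
apply/subset_leq_card/subsetP => _ /imsetP [S S_in ->].
by rewrite inE even_symdiff_parity //; move: S_in S0_in; rewrite !inE => /eqP -> /eqP ->.
Qed.

Lemma min_even_card (c e : {set 'I_n}) :
  (forall S, (S != set0) && even_set A S -> #|c| <= #|S|) -> even_set A c ->
  even_set A e -> e != set0 -> e != c -> #|c| <= 2 * #|e :\: c|.
Proof.
move=> c_min c_even e_even e_ne e_neq_c.
have le_ce : #|c| <= #|e| by apply: c_min; rewrite e_ne.
have le_c_sd : #|c| <= #|symdiff e c|.
  by apply: c_min; rewrite symdiff_eq0 e_neq_c even_symdiff.
have := sum_symdiff (fun=> 1) e c; rewrite !sum1_card.
have := cardsID c e; have := cardsID e c; rewrite setIC; lia.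
Qed.

Lemma epsA_bound : m + 3 <= n -> 3 * uphalf (epsA A) <= 2 * (n - epsA A).
Proof.
move=> /card_even_sets many_even.
have [c0] := exists_notin (leq_trans (isT : size [:: set0] < 8) many_even).
rewrite !inE => c0_even c0_ne.
pose nonempty_even S := (S != set0) && even_set A S.
have [|c /andP [c_ne c_even] c_min] := @arg_minnP _ c0 nonempty_even (fun S => #|S|).
  by rewrite /nonempty_even c0_ne.
have eps_le : epsA A <= #|c| by apply: (@bigmin_le_cond _ nat); rewrite c_ne.
have [e1] := exists_notin (leq_trans (isT : size [:: set0; c] < 8) many_even).
rewrite !inE negb_or => e1_even /andP [e1_ne e1_neq_c].
have [e2] := exists_notin (leq_trans (isT : size [:: set0; c; e1; symdiff e1 c] < 8) many_even).
rewrite !inE !negb_or => e2_even /and4P [e2_ne e2_neq_c e2_neq_e1 e2_neq_sd].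
have e3_ne : symdiff e1 e2 != set0 by rewrite symdiff_eq0 eq_sym.
have e3_neq_c : symdiff e1 e2 != c.
  by apply: contraNneq e2_neq_sd => <-; rewrite symdiffKl.
have le1 := min_even_card c_min c_even e1_even e1_ne e1_neq_c.
have le2 := min_even_card c_min c_even e2_even e2_ne e2_neq_c.
have le3 := min_even_card c_min c_even (even_symdiff e1_even e2_even) e3_ne e3_neq_c.
have outside := card_setD_symdiff e1 e2 c; rewrite card_ord in outside.
clear -eps_le le1 le2 le3 outside; lia.
Qed.

End EvenSets.

Lemma eps_mn_bound m n : m + 3 <= n -> 3 * uphalf (eps_mn m n) <= 2 * (n - eps_mn m n).
Proof.
rewrite /eps_mn; have [|A ->] := @bigop.eq_bigmax _ (@epsA m n); last exact: epsA_bound.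
by apply/card_gt0P; exists (const_mx false).
Qed.

Lemma u_mn_le_eps_mn m n : u_mn m n <= eps_mn m n.
Proof. by apply/bigmax_leqP => A _; apply: leq_trans (uA_le_epsA A) (leq_bigmax A). Qed.

Theorem theorem7p1 :
  (forall n : nat, 0 < n -> n %% 7 != 6 ->
     u_mn n (n + 3) = (4 * n + 12) %/ 7 /\ eps_mn n (n + 3) = (4 * n + 12) %/ 7) /\
  (forall m : nat, 0 < m -> u_mn (7 * m - 1) (7 * m + 2) = 4 * m).
Proof.
split=> [n n_gt0 n_mod7 | m m_gt0].
  have [k [r [n_eq r_range r_ne6]]] : exists k r, [/\ n = r + 7 * k, 0 < r <= 7 & r != 6].
    by exists ((n - 1) %/ 7), ((n - 1) %% 7 + 1); split; lia.
  have := u_mn_lower_bound n_eq r_range; rewrite /base_bound (negbTE r_ne6).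
  have := u_mn_le_eps_mn n (n + 3); have := eps_mn_bound (leqnn (n + 3)).
  lia.
rewrite (_ : 7 * m + 2 = 7 * m - 1 + 3); last lia.
have n_eq : 7 * m - 1 = 6 + 7 * (m - 1) by lia.
have := u_mn_lower_bound n_eq isT; rewrite /base_bound /=.
have := u_mn_le_eps_mn (7 * m - 1) (7 * m - 1 + 3).
have := eps_mn_bound (leqnn (7 * m - 1 + 3)).
lia.
Qed.
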